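(* Let $\Theta\in\mathbb{R}^d$ denote a parameter vector and let $\ell:\mathcal{Z}\times\mathbb{R}^d\to[0,\infty)$ be a non-negative loss, differentiable in $\Theta$, with gradient $\nabla_{\Theta}\ell(z;\Theta)$. Let $(p^t)_{t\ge 0}$ and $p^*$ be probability densities on $\mathcal{Z}$ (with respect to a common reference measure $dz$), and set $c^t\triangleq\int|p^t(z)-p^*(z)|\,dz$. Assume: (i) (finite variance) there is $G>0$ such that for all $t$ and all $\Theta$, $\mathbb{E}_{Z\sim p^t}\big[\Vert\nabla_{\Theta}\ell(Z;\Theta)\Vert^2\big]\le G$; (ii) (convergence of the input distribution) $\sum_{t} c^t<\infty$. Then for all $\Theta$, $\mathbb{E}_{Z\sim p^*}\big[\Vert\nabla_{\Theta}\ell(Z;\Theta)\Vert^2\big]\le G$.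
   Context: This is the setting of a single module $j>1$ in a layer-wise (''greedy'') training scheme: $p^t$ is the time-varying density at step $t$ of the input sample $Z=(X,Y)$ fed to the module (the output of the previous, still-training module together with the label), $p^*$ is the density of the previous module's output at convergence, and $\ell$ is the composition of the loss with the module and its auxiliary network, whose joint parameters are $\Theta$. *)

From HB Require Import structures.
From mathcomp Require Import all_boot all_order all_algebra.
From mathcomp Require Import all_classical all_reals all_analysis.
Set Implicit Arguments. Unset Strict Implicit. Unset Printing Implicit Defensive.
Import Order.TTheory GRing.Theory Num.Theory.
Import numFieldNormedType.Exports.
Local Open Scope ring_scope.

Definition grad (R : realType) (d : nat) (f : 'rV[R]_d -> R) (Theta : 'rV[R]_d)
  : 'rV[R]_d := \row_(i < d) derive f Theta (delta_mx 0 i).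

Definition sqnorm (R : realType) (d : nat) (v : 'rV[R]_d) : R :=
  \sum_(i < d) (v 0 i) ^+ 2.

Definition is_density (dZ : measure_display) (Z : measurableType dZ)
  (R : realType) (mu : {measure set Z -> \bar R}) (p : Z -> R) : Prop :=
  [/\ measurable_fun setT p, (forall z, 0 <= p z)
    & (\int[mu]_z (p z)%:E = 1)%E].

Definition expect (dZ : measure_display) (Z : measurableType dZ)
  (R : realType) (mu : {measure set Z -> \bar R}) (p : Z -> R) (g : Z -> R)
  : \bar R := (\int[mu]_z (p z * g z)%:E)%E.

From HB Require Import structures.
From mathcomp Require Import all_boot all_order all_algebra.
From mathcomp Require Import all_classical all_reals all_analysis.
From mathcomp Require Import measurable_realfun lra.
Import Order.TTheory GRing.Theory Num.Theory.
Import numFieldNormedType.Exports.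
Local Open Scope classical_set_scope.
Local Open Scope ring_scope.

(* Write g for the squared gradient norm and truncate it: for every level M,
   min (g, M) integrates against p* to at most E_{p^t}[g] + M c^t <= G + M c^t.
   The terms of a convergent series get arbitrarily small, so each truncated
   expectation is at most G, and monotone convergence as M -> oo concludes. *)

Lemma nneseries_lt_pinfty_term_le (R : realType) (c : nat -> \bar R) :
  (forall t, 0 <= c t)%E -> (\sum_(0 <= t <oo) c t < +oo)%E ->
  forall eps : R, 0 < eps -> exists t, (c t <= eps%:E)%E.
Proof.
move=> c0 cfin eps eps0.
have tail0 := nneseries_tail_cvg cfin (fun t _ => c0 t).
have eps0E : (0 < eps%:E)%E by rewrite lte_fin.
have [N _ tail_lt] : \forall N \near \oo, (\sum_(N <= k <oo) c k < eps%:E)%E.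
  exact: tail0 _ (open_ereal_lt' eps0E).
exists N; apply/ltW/(le_lt_trans _ (tail_lt N (leqnn N))).
apply: le_trans (nneseries_lim_ge N.+1 (fun n _ _ => c0 n)).
by rewrite big_nat1.
Qed.

Section truncated_expectation.
Context (dZ : measure_display) (Z : measurableType dZ) (R : realType).
Variables (mu : {measure set Z -> \bar R}) (q g : Z -> R).
Hypotheses (mq : measurable_fun setT q) (q0 : forall z, 0 <= q z).
Hypotheses (mg : measurable_fun setT g) (g0 : forall z, 0 <= g z).

Let measurable_mul_minr (M : R) :
  measurable_fun setT (fun z => (q z * Num.min (g z) M)%:E).
Proof. by apply/measurable_EFinP/measurable_funM => //; exact: measurable_minr. Qed.

Let mul_minr_ge0 (M : R) z : 0 <= M -> (0 <= (q z * Num.min (g z) M)%:E)%E.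
Proof. by move=> M0; rewrite lee_fin mulr_ge0 // le_min g0. Qed.

Lemma ge0_integral_mul_le_of_minr (G : \bar R) :
  (forall n : nat, (\int[mu]_z (q z * Num.min (g z) n%:R)%:E <= G)%E) ->
  (\int[mu]_z (q z * g z)%:E <= G)%E.
Proof.
move=> trunc_le.
pose h n z := (q z * Num.min (g z) n%:R)%:E.
have h0 n z : setT z -> (0 <= h n z)%E by move=> _; exact: mul_minr_ge0.
have nd_h z : setT z -> nondecreasing_seq (h ^~ z).
  move=> _ m n mn; rewrite lee_fin ler_wpM2l // le_min !ge_min lexx /=.
  by rewrite ler_nat mn orbT.
have -> : (\int[mu]_z (q z * g z)%:E = \int[mu]_z limn (h ^~ z))%E.
  apply: eq_integral => z _; apply/esym/cvg_lim => //.
  apply: cvg_near_cst; near=> n; rewrite /h; congr (_ * _)%:E.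
  by apply/min_idPl/ltW; near: n; exact: nbhs_infty_gtr.
rewrite (monotone_convergence mu measurableT (fun n => measurable_mul_minr _) h0 nd_h).
apply: lime_le; last exact: nearW.
apply: ereal_nondecreasing_is_cvgn => m n mn.
by apply: ge0_le_integral => // z _; [exact: h0 | exact: nd_h].
Unshelve. all: by end_near.
Qed.

Lemma integral_mul_minr_le_L1 (p : Z -> R) (M : R) :
  measurable_fun setT p -> (forall z, 0 <= p z) -> 0 <= M ->
  (\int[mu]_z (q z * Num.min (g z) M)%:E <=
   \int[mu]_z (p z * g z)%:E + M%:E * \int[mu]_z `|p z - q z|%:E)%E.
Proof.
move=> mp p0 M0.
have mdist : measurable_fun setT (fun z => `|p z - q z|).
  by apply: measurableT_comp => //; apply: measurable_funB.
have pg0 z : setT z -> (0 <= (p z * g z)%:E)%E by rewrite lee_fin mulr_ge0.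
have Mdist0 z : setT z -> (0 <= M%:E * `|p z - q z|%:E)%E.
  by rewrite -EFinM lee_fin mulr_ge0.
have mpg : measurable_fun setT (fun z => (p z * g z)%:E).
  by apply/measurable_EFinP; apply: measurable_funM.
have mMdist : measurable_fun setT (fun z => M%:E * `|p z - q z|%:E)%E.
  by apply: emeasurable_funM => //; exact/measurable_EFinP.
rewrite -ge0_integralZl //; last exact/measurable_EFinP.
rewrite -ge0_integralD //; apply: ge0_le_integral => //.
- by move=> z _; exact: mul_minr_ge0.
- exact: emeasurable_funD.
move=> z _; rewrite -EFinM -EFinD lee_fin.
set m := Num.min (g z) M; set a := `|p z - q z|.
have m0 : 0 <= m by rewrite le_min g0.
have m_le_g : m <= g z by rewrite ge_min lexx.
have m_le_M : m <= M by rewrite ge_min lexx orbT.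
have qp_le : q z - p z <= a by rewrite /a distrC ler_norm.
(* q m = p m + (q - p) m <= p g + a m <= p g + a M *)
have : 0 <= p z * (g z - m) by apply: mulr_ge0; rewrite ?subr_ge0 ?p0.
have : 0 <= (a - (q z - p z)) * m by apply: mulr_ge0; rewrite ?subr_ge0 ?p0.
have : 0 <= a * (M - m) by apply: mulr_ge0; rewrite ?subr_ge0 ?normr_ge0.
lra.
Qed.

Lemma integral_mul_le_of_L1_approx (G : R) :
  (forall eps, 0 < eps -> exists p : Z -> R,
     [/\ measurable_fun setT p, forall z, 0 <= p z,
         (\int[mu]_z (p z * g z)%:E <= G%:E)%E
       & (\int[mu]_z `|p z - q z|%:E <= eps%:E)%E]) ->
  (\int[mu]_z (q z * g z)%:E <= G%:E)%E.
Proof.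
move=> approx; apply: ge0_integral_mul_le_of_minr => n.
apply/lee_addgt0Pr => e e0.
have n1_gt0 : 0 < n%:R + 1 :> R by rewrite ltr_wpDl.
have [p [mp p0 pg_le dist_le]] := approx _ (divr_gt0 e0 n1_gt0).
apply: le_trans (integral_mul_minr_le_L1 _ _ mp p0 (ler0n R n)) _.
apply: leeD => //; apply: le_trans (lee_wpmul2l (lee0n n) dist_le) _.
rewrite -EFinM lee_fin mulrA ler_pdivrMr //; nra.
Qed.

End truncated_expectation.

Lemma sqnorm_ge0 (R : realType) (d : nat) (v : 'rV[R]_d) : 0 <= sqnorm v.
Proof. by apply: sumr_ge0 => i _; exact: sqr_ge0. Qed.

Theorem lemma1 (R : realType) (d : nat) (dZ : measure_display)
  (Z : measurableType dZ) (mu : {measure set Z -> \bar R})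
  (loss : Z -> 'rV[R]_d -> R) (p : nat -> Z -> R) (pstar : Z -> R) (G : R) :
  (forall z Theta, 0 <= loss z Theta) ->
  (forall z Theta, differentiable (loss z) Theta) ->
  (forall Theta, measurable_fun setT (fun z => sqnorm (grad (loss z) Theta))) ->
  (forall t, is_density mu (p t)) ->
  is_density mu pstar ->
  0 < G ->
  (forall t Theta,
      (expect mu (p t) (fun z => sqnorm (grad (loss z) Theta)) <= G%:E)%E) ->
  (\sum_(0 <= t <oo) \int[mu]_z (`|p t z - pstar z|)%:E < +oo)%E ->
  forall Theta,
    (expect mu pstar (fun z => sqnorm (grad (loss z) Theta)) <= G%:E)%E.
Proof.
move=> _ _ mgrad dens_p [mpstar pstar0 _] _ expect_le sum_fin Theta.
apply: integral_mul_le_of_L1_approx => // [z|eps eps0]; first exact: sqnorm_ge0.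
have dist_ge0 t : (0 <= \int[mu]_z `|p t z - pstar z|%:E)%E.
  by apply: integral_ge0 => z _; rewrite lee_fin.
have [t dist_le] := nneseries_lt_pinfty_term_le _ _ dist_ge0 sum_fin _ eps0.
have [mpt pt0 _] := dens_p t.
by exists (p t); split => //; exact: expect_le.
Qed.
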